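(* For all integers $n \geq k \geq 1$ and $1 \leq m < n$, under any bi-partition of the input positions between Alice and Bob, $D(\operatorname{SSD}_{n,k,m}) = O(k \log n)$.
   Context: For $\Sigma = \{0,1,\dots,m\}$, $\operatorname{SSD}_{n,k,m} : \Sigma^n \times \Sigma^k \to \{0,1\}$ is $1$ iff $y$ is a subsequence of $x$ (there exist indices $i_1 < \dots < i_k$ with $x_{i_j} = y_j$). A bi-partition assigns each of the $n+k$ characters of $(x,y)$ to Alice or Bob. $D(f)$ is the minimum worst-case number of bits exchanged by a deterministic two-party protocol computing $f$. *)

From mathcomp Require Import all_boot.
Set Implicit Arguments. Unset Strict Implicit. Unset Printing Implicit Defensive.

(* Alphabet Sigma = {0,...,m} is 'I_m.+1. Input (x,y) with x in Sigma^n, y in Sigma^k. *)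
Definition input (n k m : nat) : Type :=
  (('I_n -> 'I_m.+1) * ('I_k -> 'I_m.+1))%type.

Definition position (n k : nat) : Type := ('I_n + 'I_k)%type.

Definition char_at n k m (z : input n k m) (p : position n k) : 'I_m.+1 :=
  match p with inl i => z.1 i | inr j => z.2 j end.

Definition SSD n k m (z : input n k m) : Prop :=
  exists idx : 'I_k -> 'I_n,
    (forall j1 j2 : 'I_k, j1 < j2 -> idx j1 < idx j2) /\
    (forall j : 'I_k, z.1 (idx j) = z.2 j).

(* A bi-partition: owner p = true means position p is given to Alice,
   false means Bob. *)
Definition bipartition (n k : nat) : Type := position n k -> bool.

(* At an internal node
   [Node a f l r] the player a (true = Alice, false = Bob) sends the bit
   f z; the protocol continues in r if the bit is true, in l otherwise. *)
Inductive protocol (T : Type) : Type :=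
| Leaf of bool
| Node of bool & (T -> bool) & protocol T & protocol T.

Fixpoint run T (P : protocol T) (z : T) : bool :=
  match P with
  | Leaf b => b
  | Node _ f l r => if f z then run r z else run l z
  end.

(* Number of bits exchanged in the worst case = depth of the tree. *)
Fixpoint depth T (P : protocol T) : nat :=
  match P with
  | Leaf _ => 0
  | Node _ _ l r => (maxn (depth l) (depth r)).+1
  end.

Definition same_view n k m (own : bipartition n k) (a : bool) (z z' : input n k m) : Prop :=
  forall p : position n k, own p = a -> char_at z p = char_at z' p.

(* Each message depends only on the sender's own part of the input
   (the history is encoded by the position in the tree). *)
Fixpoint valid n k m (own : bipartition n k) (P : protocol (input n k m)) : Prop :=
  match P with
  | Leaf _ => True
  | Node a f l r =>
      (forall z z', same_view own a z z' -> f z = f z') /\ valid own l /\ valid own r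
  end.

Definition computes n k m (P : protocol (input n k m)) (F : input n k m -> Prop) : Prop :=
  forall z, run P z = true <-> F z.

Definition D_le n k m (own : bipartition n k) (F : input n k m -> Prop) (d : nat) : Prop :=
  exists P : protocol (input n k m), valid own P /\ computes P F /\ depth P <= d.

From mathcomp Require Import all_boot zify.
Set Implicit Arguments. Unset Strict Implicit. Unset Printing Implicit Defensive.

(* y is a subsequence of x iff the greedy scan succeeds: match y_1, y_2, ... in
   turn, each with the first position after the previous match where x carries
   that symbol (MathComp's [subseq] is exactly this scan, see [cons_subseqE]).
   The players simulate the scan with three messages per symbol of y: the owner
   of y_j announces it, then Alice and Bob each announce the first such position
   among their own positions of x; the smaller one is the greedy match.  Every
   message is a number below 2^L with L = log n + 1 (recall m < n), so the
   protocol uses 3kL <= 6k log n bits. *)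

Local Notation ord_lt n := (relpre (@nat_of_ord n) ltn).

Lemma find_predU (T : Type) (a b : pred T) s :
  find (predU a b) s = minn (find a s) (find b s).
Proof. by elim: s => //= x s ->; case: (a x); case: (b x); rewrite ?minnSS. Qed.

Lemma cons_subseqE (T : eqType) (x : T) s1 s2 :
  subseq (x :: s1) s2 = (x \in s2) && subseq s1 (drop (index x s2).+1 s2).
Proof.
elim: s2 => //= y s2 IH; rewrite in_cons eq_sym.
by case: eqP => //= _; rewrite drop0.
Qed.

Lemma ord_lt_trans n : transitive (ord_lt n).
Proof. by move=> ? ? ? /=; apply: ltn_trans. Qed.

Lemma sorted_enum_ord n : sorted (ord_lt n) (enum 'I_n).
Proof. by rewrite -sorted_map val_enum_ord iota_ltn_sorted. Qed.

Lemma subseq_enum_ord n (s : seq 'I_n) : subseq s (enum 'I_n) = sorted (ord_lt n) s.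
Proof.
apply/idP/idP => [sub_s | sorted_s].
  exact: (subseq_sorted (@ord_lt_trans n) sub_s (sorted_enum_ord n)).
have -> : s = filter (mem s) (enum 'I_n).
  apply: (irr_sorted_eq (@ord_lt_trans n)) => //.
  - by move=> i /=; rewrite ltnn.
  - exact: (sorted_filter (@ord_lt_trans n) _ (sorted_enum_ord n)).
  - by move=> i; rewrite mem_filter mem_enum andbT.
exact: filter_subseq.
Qed.

Lemma subseq_map_enumP (T : eqType) n k (x : 'I_n -> T) (y : 'I_k -> T) :
  (exists idx : 'I_k -> 'I_n,
     (forall j1 j2 : 'I_k, j1 < j2 -> idx j1 < idx j2) /\ (forall j, x (idx j) = y j))
  <-> subseq (map y (enum 'I_k)) (map x (enum 'I_n)).
Proof.
split=> [[idx [idx_mono x_idx]] | /subseqP[mask_x _ y_mask]].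
  rewrite -(eq_map x_idx) map_comp; apply: map_subseq.
  by rewrite subseq_enum_ord (homo_sorted idx_mono _ (sorted_enum_ord k)).
set s := mask mask_x (enum 'I_n).
have sorted_s : sorted (ord_lt n) s by rewrite -subseq_enum_ord mask_subseq.
have y_s : map y (enum 'I_k) = map x s by rewrite y_mask map_mask.
have /eqP size_s : size s = k by rewrite -(size_map x) -y_s size_map size_enum_ord.
set t := Tuple size_s.
exists (tnth t); split => [j1 j2 lt_j12 | j].
  have i0 : 'I_n := tnth t j1.
  rewrite !(tnth_nth i0).
  by apply: (sorted_ltn_nth (@ord_lt_trans n) _ sorted_s); rewrite ?inE ?(eqP size_s).
have i0 : 'I_n := tnth t j.
have := congr1 (nth (y j) ^~ j) y_s.
rewrite (nth_map j) ?size_enum_ord // nth_ord_enum => ->.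
by rewrite (tnth_nth i0) (nth_map i0) ?(eqP size_s).
Qed.

Section Send.

Variable T : Type.

Fixpoint send (b : nat) (a : bool) (g : T -> nat) (cont : nat -> protocol T) : protocol T :=
  match b with
  | 0 => cont 0
  | b'.+1 => Node a (fun z => odd (g z))
      (send b' a (fun z => (g z)./2) (fun v => cont v.*2))
      (send b' a (fun z => (g z)./2) (fun v => cont v.*2.+1))
  end.

Lemma run_send b a g cont z : g z < 2 ^ b -> run (send b a g cont) z = run (cont (g z)) z.
Proof.
elim: b g cont => [|b IH] g cont /= g_lt; first by move: g_lt; rewrite ltnS leqn0 => /eqP ->.
have half_lt : (g z)./2 < 2 ^ b by rewrite ltn_half_double -mul2n -expnS.
by case: ifP => g_odd; rewrite IH // -[in RHS](odd_double_half (g z)) g_odd.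
Qed.

Lemma depth_send b a g cont d :
  (forall v, depth (cont v) <= d) -> depth (send b a g cont) <= b + d.
Proof.
elim: b g cont => [|b IH] g cont depth_cont //=.
by rewrite addSn ltnS geq_max !IH.
Qed.

End Send.

Lemma valid_send n k m (own : bipartition n k) b a g (cont : nat -> protocol (input n k m)) :
  (forall z z', same_view own a z z' -> g z = g z') ->
  (forall v, valid own (cont v)) -> valid own (send b a g cont).
Proof.
elim: b g cont => [|b IH] g cont g_view valid_cont //=.
by split; [|split; apply: IH] => // z z' /g_view ->.
Qed.

Section GreedyProtocol.

Variables (n k m : nat) (own : bipartition n k) (L : nat).

Definition owned_match (a : bool) (c : nat) (z : input n k m) (i : 'I_n) : bool :=
  (own (inl i) == a) && (z.1 i == c :> nat).

Fixpoint greedy (px : seq 'I_n) (py : seq 'I_k) : protocol (input n k m) :=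
  if py is j :: py' then
    send L (own (inr j)) (fun z : input n k m => z.2 j : nat) (fun c =>
    send L true (fun z => find (owned_match true c z) px) (fun a =>
    send L false (fun z => find (owned_match false c z) px) (fun b =>
    if minn a b < size px then greedy (drop (minn a b).+1 px) py' else Leaf _ false)))
  else Leaf _ true.

Lemma owned_match_view a c z z' :
  same_view own a z z' -> owned_match a c z =1 owned_match a c z'.
Proof. by move=> view i; rewrite /owned_match; case: eqP => // /(view (inl i)) /= ->. Qed.

Lemma valid_greedy px py : valid own (greedy px py).
Proof.
elim: py px => [|j py IH] px //=.
apply: valid_send => [z z' /(_ (inr j) erefl) /= -> // | c].
apply: valid_send => [z z' /owned_match_view/eq_find -> // | a].
apply: valid_send => [z z' /owned_match_view/eq_find -> // | b].
by case: ifP.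
Qed.

Lemma depth_greedy px py : depth (greedy px py) <= size py * (3 * L).
Proof.
elim: py px => [|j py IH] px //=.
have -> : (size py).+1 * (3 * L) = L + (L + (L + size py * (3 * L))) by lia.
do 3 apply: depth_send => ?.
by case: ifP.
Qed.

Lemma run_greedy px py z : m < 2 ^ L -> size px < 2 ^ L ->
  run (greedy px py) z = subseq (map z.2 py) (map z.1 px).
Proof.
move=> m_lt; elim: py px => [|j py IH] px px_lt /=; first by rewrite sub0seq.
have find_lt a c : find (owned_match a c z) px < 2 ^ L.
  exact: leq_ltn_trans (find_size _ _) px_lt.
rewrite !run_send ?find_lt ?(leq_ltn_trans (leq_ord (z.2 j))) //.
have first_match : minn (find (owned_match true (z.2 j) z) px)
                        (find (owned_match false (z.2 j) z) px) = index (z.2 j) (map z.1 px).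
  rewrite -find_predU /index find_map; apply: eq_find => i.
  by rewrite /= /owned_match; case: (own _); rewrite /= ?orbF.
rewrite first_match (@cons_subseqE _ (z.2 j)) -index_mem size_map -map_drop.
case: ifP => // _; rewrite IH // size_drop.
exact: leq_ltn_trans (leq_subr _ _) px_lt.
Qed.

End GreedyProtocol.

Theorem mainTheorem10 :
  exists C : nat,
    forall (n k m : nat) (own : bipartition n k),
      1 <= k -> k <= n -> 1 <= m -> m < n ->
      D_le own (@SSD n k m) (C * k * trunc_log 2 n).
Proof.
exists 6 => n k m own _ _ m_gt0 m_lt_n.
set L := (trunc_log 2 n).+1.
have n_lt : n < 2 ^ L by apply: trunc_log_ltn.
have m_lt : m < 2 ^ L by lia.
have log_gt0 : 0 < trunc_log 2 n by rewrite trunc_log_gt0; lia.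
exists (greedy m own L (enum 'I_n) (enum 'I_k)); split; first exact: valid_greedy.
split=> [z | ].
  rewrite run_greedy ?size_enum_ord //.
  exact: iff_sym (subseq_map_enumP z.1 z.2).
apply: leq_trans (depth_greedy _ _ _ _ _) _.
by rewrite size_enum_ord /L; nia.
Qed.
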